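(* Let $H:\mathbb{D}\times\mathbb{D}\to\Omega_1$, $H(z,w)=\left(\frac{z-w}{1-zw},\,-i\frac{z+w}{1-zw}\right)$ (a biholomorphism), let $F:\mathbb{G}\to\mathcal{D}_1$, $F(s,p)=\left(i\frac{1+p}{1-p},\,-i\frac{s}{1-p}\right)$ (a biholomorphism), and let $sym:\mathbb{D}\times\mathbb{D}\to\mathbb{G}$, $sym(z_1,z_2)=(z_1+z_2,z_1z_2)$. Then there is a proper holomorphic map $sym_{\Omega_1}:\Omega_1\to\mathcal{D}_1$ such that $sym_{\Omega_1}\circ H=F\circ sym$ on $\mathbb{D}\times\mathbb{D}$.
   Context: $\mathbb{D}$ is the open unit disc in $\mathbb{C}$. $\mathbb{G}=\{(z_1+z_2,z_1z_2):z_1,z_2\in\mathbb{D}\}$. $\Omega_1=\{(u,v)\in\mathbb{C}^2: |u^2|+|v^2|-1<|u^2+v^2-1|\}$. $\mathcal{D}_1=\{(z_1,z_2)\in\mathbb{C}^2: 1+|z_1|^2-|z_2|^2>|1+z_1^2-z_2^2|,\ \mathrm{Im}(z_1(1+\overline{z_2}))>0\}$. *)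

From Stdlib Require Import Reals.
From Coquelicot Require Import Coquelicot.
Open Scope R_scope.

Definition C2 := (C * C)%type.
Definition n2 (x : C2) : R := Rmax (Cmod (fst x)) (Cmod (snd x)).
Definition add2 (x y : C2) : C2 := (Cplus (fst x) (fst y), Cplus (snd x) (snd y)).
Definition sub2 (x y : C2) : C2 := (Cminus (fst x) (fst y), Cminus (snd x) (snd y)).

Definition Disc (z : C) : Prop := Cmod z < 1.

Definition Gsym (x : C2) : Prop :=
  exists z1 z2 : C, Disc z1 /\ Disc z2 /\ x = (Cplus z1 z2, Cmult z1 z2).

Definition Omega1 (x : C2) : Prop :=
  let u := fst x in let v := snd x in
  Cmod (Cmult u u) + Cmod (Cmult v v) - 1
    < Cmod (Cminus (Cplus (Cmult u u) (Cmult v v)) (RtoC 1)).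

Definition D1 (x : C2) : Prop :=
  let z1 := fst x in let z2 := snd x in
  Cmod (Cminus (Cplus (RtoC 1) (Cmult z1 z1)) (Cmult z2 z2))
    < 1 + Cmod z1 ^ 2 - Cmod z2 ^ 2
  /\ 0 < Im (Cmult z1 (Cconj (Cplus (RtoC 1) z2))).

Definition Hmap (x : C2) : C2 :=
  let z := fst x in let w := snd x in
  (Cdiv (Cminus z w) (Cminus (RtoC 1) (Cmult z w)),
   Cmult (Copp Ci) (Cdiv (Cplus z w) (Cminus (RtoC 1) (Cmult z w)))).

Definition Fmap (x : C2) : C2 :=
  let s := fst x in let p := snd x in
  (Cmult Ci (Cdiv (Cplus (RtoC 1) p) (Cminus (RtoC 1) p)),
   Cmult (Copp Ci) (Cdiv s (Cminus (RtoC 1) p))).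

Definition symm (x : C2) : C2 := (Cplus (fst x) (snd x), Cmult (fst x) (snd x)).

Definition C_differentiable_at (f : C2 -> C2) (x : C2) : Prop :=
  exists a b c d : C,
    forall eps : R, 0 < eps -> exists delta : R, 0 < delta /\
      forall h : C2, n2 h < delta ->
        n2 (sub2 (sub2 (f (add2 x h)) (f x))
                 (Cplus (Cmult a (fst h)) (Cmult b (snd h)),
                  Cplus (Cmult c (fst h)) (Cmult d (snd h))))
          <= eps * n2 h.

Definition holomorphic_on (U : C2 -> Prop) (f : C2 -> C2) : Prop :=
  forall x, U x -> C_differentiable_at f x.

(* Compactness in C^2 (a metric space): sequential compactness. *)
Definition seq_cvg (u : nat -> C2) (l : C2) : Prop :=
  forall eps : R, 0 < eps -> exists N : nat, forall n, (N <= n)%nat -> n2 (sub2 (u n) l) < eps.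

Definition compact2 (K : C2 -> Prop) : Prop :=
  forall u : nat -> C2, (forall n, K (u n)) ->
    exists (phi : nat -> nat) (l : C2),
      (forall n, (phi n < phi (S n))%nat) /\ K l /\ seq_cvg (fun n => u (phi n)) l.

Definition proper_map (U V : C2 -> Prop) (f : C2 -> C2) : Prop :=
  (forall x, U x -> V (f x)) /\
  forall K : C2 -> Prop, compact2 K -> (forall y, K y -> V y) ->
    compact2 (fun x => U x /\ K (f x)).

(* The map is sym_Omega1 (u, v) = (i sqrt(1 - u^2 - v^2), v) with the principal
   square root.  Its first coordinate w satisfies w^2 = u^2 + v^2 - 1, and under
   this relation the inequality defining Omega1 is exactly the modulus inequality
   of D1 at (w, v); the other condition of D1 then only says Im w > 0, i.e. that
   the root is the principal one.  Hence Omega1 is mapped into D1, holomorphically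
   since 1 - u^2 - v^2 avoids the closed negative axis there.  For properness,
   |u| <= 1 + |w| + |v|, so a sequence in the preimage of a compact set has a
   convergent subsequence, and w^2 = u^2 + v^2 - 1, Im w > 0 survive in the limit,
   which puts the limit point in Omega1.  On the image of H the radicand is
   ((1 + p) / (1 - p))^2 with p = z w, whose principal root is the Cayley
   transform (1 + p) / (1 - p) since |p| < 1. *)

From Stdlib Require Import Reals Lra Lia Psatz ClassicalEpsilon.
From Coquelicot Require Import Coquelicot.
Open Scope R_scope.

Lemma strict_incr_lt (phi : nat -> nat) :
  (forall n, (phi n < phi (S n))%nat) -> forall n m, (n < m)%nat -> (phi n < phi m)%nat.
Proof.
  intros Hphi n m Hnm; induction Hnm as [|m _ IH]; [apply Hphi|].
  specialize (Hphi m); lia.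
Qed.

Lemma strict_incr_comp (phi psi : nat -> nat) :
  (forall n, (phi n < phi (S n))%nat) -> (forall n, (psi n < psi (S n))%nat) ->
  forall n, (phi (psi n) < phi (psi (S n)))%nat.
Proof. intros Hphi Hpsi n; apply strict_incr_lt; auto. Qed.

Lemma filterlim_subseq {U : UniformSpace} (u : nat -> U) (l : U) (phi : nat -> nat) :
  (forall n, (phi n < phi (S n))%nat) ->
  filterlim u eventually (locally l) -> filterlim (fun n => u (phi n)) eventually (locally l).
Proof. intros Hphi; apply filterlim_comp, eventually_subseq, Hphi. Qed.

Lemma cluster_value_subseq {U : UniformSpace} (u : nat -> U) (l : U) :
  (forall (eps : posreal) (N : nat), exists p, (N <= p)%nat /\ ball l eps (u p)) ->
  exists phi : nat -> nat,
    (forall n, (phi n < phi (S n))%nat) /\ filterlim (fun n => u (phi n)) eventually (locally l).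
Proof.
  intros Hcl.
  set (pick N k := proj1_sig (constructive_indefinite_description _ (Hcl (RinvN k) N))).
  assert (Hpick : forall N k, (N <= pick N k)%nat /\ ball l (RinvN k) (u (pick N k)))
    by (intros N k; unfold pick; destruct constructive_indefinite_description; assumption).
  set (phi := fix phi n := match n with O => pick O O | S m => pick (S (phi m)) (S m) end).
  assert (Hball : forall n, ball l (RinvN n) (u (phi n))) by (intros [|n]; apply Hpick).
  exists phi; split.
  - intros n; simpl; destruct (Hpick (S (phi n)) (S n)); lia.
  - apply filterlim_locally; intros eps.
    destruct (archimed_cor1 eps (cond_pos eps)) as [k [Hk Hk0]].
    exists k; intros n Hn.
    apply ball_le with (RinvN n); [|apply Hball].
    simpl; apply Rlt_le, Rle_lt_trans with (/ INR k); [|exact Hk].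
    apply Rinv_le_contravar; [apply lt_0_INR; exact Hk0|].
    apply le_INR in Hn; lra.
Qed.

Lemma bounded_seq_cvg_subseq (s : nat -> R) (B : R) :
  (forall n, Rabs (s n) <= B) ->
  exists (phi : nat -> nat) (l : R),
    (forall n, (phi n < phi (S n))%nat) /\ filterlim (fun n => s (phi n)) eventually (locally l).
Proof.
  intros HB.
  destruct (Bolzano_Weierstrass s _ (compact_P3 (- B) B)) as [l Hl].
  { intros n; specialize (HB n); apply Rabs_le_between in HB; lra. }
  destruct (cluster_value_subseq s l) as [phi Hphi]; [|exists phi, l; exact Hphi].
  intros eps N; apply (Hl (ball l eps)); exists eps; intros y Hy; exact Hy.
Qed.

Lemma im_le_Cmod (c : C) : Rabs (Im c) <= Cmod c.
Proof. pose proof (Rmax_Cmod c); pose proof (Rmax_r (Rabs (Re c)) (Rabs (Im c))); unfold Re, Im in *; lra. Qed.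

Lemma filterlim_C_re_im {T : Type} {F : (T -> Prop) -> Prop} {FF : Filter F} (s : T -> C) (a b : R) :
  filterlim (fun t => Re (s t)) F (locally a) -> filterlim (fun t => Im (s t)) F (locally b) ->
  filterlim s F (locally ((a, b) : C)).
Proof.
  intros Ha Hb; apply filterlim_locally; intros eps.
  apply filter_and; [apply (proj1 (filterlim_locally _ _) Ha) | apply (proj1 (filterlim_locally _ _) Hb)].
Qed.

Lemma bounded_C_seq_cvg_subseq (s : nat -> C) (B : R) :
  eventually (fun n => Cmod (s n) <= B) ->
  exists (phi : nat -> nat) (l : C),
    (forall n, (phi n < phi (S n))%nat) /\ filterlim (fun n => s (phi n)) eventually (locally l).
Proof.
  intros [N HB].
  destruct (bounded_seq_cvg_subseq (fun n => Re (s (N + n)%nat)) B) as [phi [a [Hphi Ha]]].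
  { intros n; eapply Rle_trans; [apply re_le_Cmod | apply HB; lia]. }
  destruct (bounded_seq_cvg_subseq (fun n => Im (s (N + phi n)%nat)) B) as [psi [b [Hpsi Hb]]].
  { intros n; eapply Rle_trans; [apply im_le_Cmod | apply HB; lia]. }
  exists (fun n => (N + phi (psi n))%nat), (a, b); split.
  - intros n; pose proof (strict_incr_comp phi psi Hphi Hpsi n); lia.
  - apply filterlim_C_re_im; [|exact Hb].
    exact (filterlim_subseq (fun n => Re (s (N + phi n)%nat)) a psi Hpsi Ha).
Qed.

Section ComplexLimits.

Context {T : Type} {F : (T -> Prop) -> Prop} {FF : Filter F}.

Lemma filterlim_Cplus (f g : T -> C) (a b : C) :
  filterlim f F (locally a) -> filterlim g F (locally b) ->
  filterlim (fun t => f t + g t)%C F (locally (a + b)%C).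
Proof.
  intros Hf Hg; apply (filterlim_comp_2 f g Cplus Hf Hg).
  apply (@filterlim_plus C_AbsRing C_NormedModule).
Qed.

(* [filterlim_mult] is stated for the uniform structure induced by [Cmod],
   not the product structure of [C]; [locally_C] converts between the two. *)
Lemma filterlim_Cmult (f g : T -> C) (a b : C) :
  filterlim f F (locally a) -> filterlim g F (locally b) ->
  filterlim (fun t => f t * g t)%C F (locally (a * b)%C).
Proof.
  intros Hf Hg.
  apply (filterlim_comp_2 (G := @locally (AbsRing_UniformSpace C_AbsRing) a)
           (H := @locally (AbsRing_UniformSpace C_AbsRing) b) f g Cmult).
  - intros P HP; apply Hf, locally_C, HP.
  - intros P HP; apply Hg, locally_C, HP.
  - intros P HP; apply (filterlim_mult a b), locally_C, HP.
Qed.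

Lemma filterlim_Cmod_eventually_le (f : T -> C) (l : C) :
  filterlim f F (locally l) -> F (fun t => Cmod (f t) <= Cmod l + 1).
Proof.
  intros Hf; generalize (proj1 (filterlim_locally_ball_norm _ _) Hf (mkposreal 1 Rlt_0_1)).
  apply filter_imp; intros t Ht.
  pose proof (Cmod_triangle (f t - l)%C l) as Htri.
  replace (f t - l + l)%C with (f t) in Htri by ring.
  change (Cmod (f t - l)%C < 1) in Ht; lra.
Qed.

End ComplexLimits.

Lemma seq_cvg_iff (u : nat -> C2) (l : C2) :
  seq_cvg u l <->
  filterlim (fun n => fst (u n)) eventually (locally (fst l)) /\
  filterlim (fun n => snd (u n)) eventually (locally (snd l)).
Proof.
  unfold seq_cvg, n2, sub2; rewrite !(filterlim_locally_ball_norm (K := C_AbsRing)); split.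
  - intros Hu; split; intros eps; destruct (Hu eps (cond_pos eps)) as [N HN]; exists N;
      intros n Hn; specialize (HN n Hn); simpl in HN.
    + change (Cmod (fst (u n) - fst l)%C < eps); eapply Rle_lt_trans; [apply Rmax_l | exact HN].
    + change (Cmod (snd (u n) - snd l)%C < eps); eapply Rle_lt_trans; [apply Rmax_r | exact HN].
  - intros [H1 H2] eps Heps.
    destruct (filter_and _ _ (H1 (mkposreal eps Heps)) (H2 (mkposreal eps Heps))) as [N HN].
    exists N; intros n Hn; destruct (HN n Hn) as [Hn1 Hn2]; apply Rmax_lub_lt; assumption.
Qed.

Open Scope C_scope.

(* The principal square root: off the closed negative real axis
   [Cmod q + Re q = 0] it has positive real part; on that axis it returns [0]. *)
Definition csqrt (q : C) : C :=
  let r := sqrt ((Cmod q + Re q) / 2) in (r, Im q / (2 * r))%R.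

Lemma csqrt_re_ge0 (q : C) : (0 <= Re (csqrt q))%R.
Proof. apply sqrt_pos. Qed.

Lemma csqrt_re_gt0 (q : C) : (0 < Cmod q + Re q)%R -> (0 < Re (csqrt q))%R.
Proof. intros Hq; apply sqrt_lt_R0; lra. Qed.

Lemma csqrt_sqr (q : C) : (0 < Cmod q + Re q)%R -> csqrt q * csqrt q = q.
Proof.
  intros Hq; pose proof (Cmod2_alt q) as Hmod.
  destruct q as [x y]; unfold csqrt, Re, Im in *; simpl fst in *; simpl snd in *.
  set (m := Cmod (x, y)) in *; set (r := sqrt ((m + x) / 2)).
  assert (Hr : (r * r = (m + x) / 2)%R) by (unfold r; rewrite sqrt_sqrt; lra).
  assert (Hr0 : (0 < r)%R) by (apply sqrt_lt_R0; lra).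
  unfold Cmult; simpl; apply injective_projections; simpl.
  - replace (y / (2 * r) * (y / (2 * r)))%R with (y * y / (4 * (r * r)))%R by (field; lra).
    rewrite Hr; apply Rmult_eq_reg_r with (m + x)%R; [|lra].
    field_simplify; [nra | lra].
  - field; lra.
Qed.

Lemma csqrt_unique (q g : C) : g * g = q -> (0 < Re g)%R -> csqrt q = g.
Proof.
  intros Hg Hre.
  assert (Hq : (0 < Cmod q + Re q)%R).
  { rewrite <- Hg, Cmod_mult, re_mult.
    pose proof (Cmod2_alt g); pose proof (Cmod_ge_0 g); nra. }
  set (c := csqrt q).
  assert (Hsum : c + g <> 0).
  { intros E; apply (f_equal Re) in E; rewrite re_plus in E.
    pose proof (csqrt_re_ge0 q) as Hc; fold c in Hc; change (Re 0) with 0%R in E; lra. }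
  apply Ceq_minus.
  replace (c - g) with ((c * c - g * g) / (c + g)) by (field; exact Hsum).
  unfold c; rewrite csqrt_sqr, Hg by exact Hq; field; exact Hsum.
Qed.

Lemma re_le_Cmod' (c : C) : (Re c <= Cmod c)%R.
Proof. pose proof (re_le_Cmod c); pose proof (Rle_abs (Re c)); lra. Qed.

Lemma Cmod_add_re_lipschitz (q q' : C) :
  (Cmod q + Re q - 2 * Cmod (q' - q) <= Cmod q' + Re q')%R.
Proof.
  assert (Hsym : Cmod (q - q') = Cmod (q' - q)) by (rewrite <- Cmod_opp; f_equal; ring).
  pose proof (Cmod_triangle q' (q - q')) as Htri.
  replace (q' + (q - q')) with q in Htri by ring.
  pose proof (re_le_Cmod' (q - q')) as Hre.
  replace (Re (q - q')) with (Re q - Re q')%R in Hre by (unfold Cminus; rewrite re_plus, re_opp; ring).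
  lra.
Qed.

Lemma re_mul_Cmod_sub_le (g g' : C) :
  (0 <= Re g)%R -> (0 <= Re g')%R -> (Re g * Cmod (g' - g) <= Cmod (g' * g' - g * g))%R.
Proof.
  intros Hg Hg'.
  replace (g' * g' - g * g) with ((g' - g) * (g' + g)) by ring.
  rewrite Cmod_mult, Rmult_comm.
  apply Rmult_le_compat_l; [apply Cmod_ge_0|].
  pose proof (re_le_Cmod' (g' + g)); rewrite re_plus in H; lra.
Qed.

Definition radicand (x : C2) : C := 1 - fst x * fst x - snd x * snd x.

Definition sym_Omega1 (x : C2) : C2 := (Ci * csqrt (radicand x), snd x).

Definition D1_ineq (z1 z2 : C) : Prop :=
  (Cmod (1 + z1 * z1 - z2 * z2) < 1 + Cmod z1 ^ 2 - Cmod z2 ^ 2)%R.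

Lemma Ci_sqr : Ci * Ci = - (1).
Proof. apply injective_projections; simpl; ring. Qed.

Lemma Cmod_sqr (z : C) : (Cmod (z * z) = Cmod z ^ 2)%R.
Proof. rewrite Cmod_mult; ring. Qed.

Lemma Omega1_radicand (x : C2) : Omega1 x -> (0 < Cmod (radicand x) + Re (radicand x))%R.
Proof.
  destruct x as [u v]; unfold Omega1, radicand; cbn [fst snd]; intros H.
  set (Q := 1 - u * u - v * v) in *.
  replace (u * u + v * v - 1) with (- Q) in H by (unfold Q; ring); rewrite Cmod_opp in H.
  pose proof (Cmod_triangle (u * u) (v * v)) as Htri.
  pose proof (re_le_Cmod' (u * u + v * v)) as Hre.
  replace (u * u + v * v) with (1 - Q) in Htri, Hre by (unfold Q; ring).
  replace (Re (1 - Q)) with (1 - Re Q)%R in Hre by (unfold Cminus; rewrite re_plus, re_opp; reflexivity).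
  lra.
Qed.

Lemma sym_Omega1_fst_sqr (x : C2) :
  Omega1 x -> fst (sym_Omega1 x) * fst (sym_Omega1 x) = fst x * fst x + snd x * snd x - 1.
Proof.
  intros Hx; simpl.
  replace (Ci * csqrt (radicand x) * (Ci * csqrt (radicand x)))
    with (Ci * Ci * (csqrt (radicand x) * csqrt (radicand x))) by ring.
  rewrite Ci_sqr, csqrt_sqr by exact (Omega1_radicand x Hx).
  unfold radicand; ring.
Qed.

Lemma sym_Omega1_eq (u v w : C) :
  w * w = u * u + v * v - 1 -> (0 < Im w)%R -> sym_Omega1 (u, v) = (w, v).
Proof.
  intros Hw Him; unfold sym_Omega1; simpl.
  rewrite (csqrt_unique _ (- Ci * w)).
  - f_equal; replace (Ci * (- Ci * w)) with (- (Ci * Ci) * w) by ring.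
    rewrite Ci_sqr; ring.
  - replace (- Ci * w * (- Ci * w)) with (Ci * Ci * (w * w)) by ring.
    rewrite Ci_sqr, Hw; unfold radicand; simpl; ring.
  - destruct w as [a b]; simpl in *; lra.
Qed.

Lemma Omega1_iff_D1_ineq (u v w : C) :
  w * w = u * u + v * v - 1 -> Omega1 (u, v) <-> D1_ineq w v.
Proof.
  intros Hw; unfold Omega1, D1_ineq; cbn [fst snd].
  replace (1 + w * w - v * v) with (u * u) by (rewrite Hw; ring).
  rewrite <- !Cmod_sqr, Hw; split; intros H; lra.
Qed.

Lemma D1_ineq_im_bound (z1 z2 : C) :
  D1_ineq z1 z2 -> (Rsqr (Im z1 * Re z2 - Re z1 * Im z2) < Rsqr (Im z1))%R.
Proof.
  unfold D1_ineq; intros H.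
  set (W := 1 + z1 * z1 - z2 * z2) in H.
  set (A := (1 + Cmod z1 ^ 2 - Cmod z2 ^ 2)%R) in H.
  assert (Hgap : (A ^ 2 - Cmod W ^ 2 =
                  4 * (Im z1 ^ 2 - Im z2 ^ 2 - Rsqr (Im z1 * Re z2 - Re z1 * Im z2)))%R).
  { unfold A; rewrite !Cmod2_alt.
    destruct z1 as [p q], z2 as [c d]; unfold W, Re, Im, Rsqr; simpl; ring. }
  pose proof (Cmod_ge_0 W); assert (Cmod W ^ 2 < A ^ 2)%R by nra.
  pose proof (pow2_ge_0 (Im z2)); unfold Rsqr in *; nra.
Qed.

Lemma D1_iff (z1 z2 : C) : D1 (z1, z2) <-> D1_ineq z1 z2 /\ (0 < Im z1)%R.
Proof.
  unfold D1; cbn [fst snd].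
  replace (Im (z1 * Cconj (1 + z2))) with (Im z1 + (Im z1 * Re z2 - Re z1 * Im z2))%R
    by (destruct z1, z2; unfold Re, Im; simpl; ring).
  split; intros [Hineq Him]; split; try exact Hineq;
    pose proof (D1_ineq_im_bound z1 z2 Hineq); unfold Rsqr in *; nra.
Qed.

Lemma sym_Omega1_maps_into_D1 (x : C2) : Omega1 x -> D1 (sym_Omega1 x).
Proof.
  intros Hx; destruct x as [u v].
  pose proof (sym_Omega1_fst_sqr _ Hx) as Hsqr.
  unfold sym_Omega1 at 1; apply D1_iff; split.
  - apply (Omega1_iff_D1_ineq u v); [exact Hsqr | exact Hx].
  - rewrite im_mult; unfold Ci at 1 2; cbn [Re Im fst snd].
    pose proof (csqrt_re_gt0 _ (Omega1_radicand _ Hx)); lra.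
Qed.

Lemma re_cayley_gt0 (p : C) : (Cmod p < 1)%R -> (0 < Re ((1 + p) / (1 - p)))%R.
Proof.
  intros Hp; pose proof (Cmod2_alt p) as Hmod; pose proof (Cmod_ge_0 p).
  destruct p as [x y]; unfold Re, Im in *; simpl fst in *; simpl snd in *.
  assert (Hxy : (x * x + y * y < 1)%R) by nra.
  assert (Hden : (0 < (1 - x) * (1 - x) + y * y)%R) by nra.
  unfold Cdiv, Cmult, Cinv, Cplus, Cminus, Copp, RtoC; simpl.
  match goal with |- (0 < ?e)%R =>
    replace e with ((1 - x * x - y * y) / ((1 - x) * (1 - x) + y * y))%R by (field; nra) end.
  apply Rdiv_lt_0_compat; lra.
Qed.

Lemma sym_Omega1_Hmap (z w : C) :
  Disc z -> Disc w -> sym_Omega1 (Hmap (z, w)) = Fmap (symm (z, w)).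
Proof.
  unfold Disc, Hmap, Fmap, symm; cbn [fst snd]; intros Hz Hw.
  set (p := z * w).
  assert (Hp : (Cmod p < 1)%R).
  { unfold p; rewrite Cmod_mult; pose proof (Cmod_ge_0 z); pose proof (Cmod_ge_0 w); nra. }
  assert (Hp1 : 1 - p <> 0).
  { intros E; apply Ceq_minus in E; rewrite <- E, Cmod_1 in Hp; lra. }
  apply sym_Omega1_eq.
  - replace (Ci * ((1 + p) / (1 - p)) * (Ci * ((1 + p) / (1 - p))))
      with (Ci * Ci * ((1 + p) / (1 - p) * ((1 + p) / (1 - p)))) by ring.
    replace (- Ci * ((z + w) / (1 - p)) * (- Ci * ((z + w) / (1 - p))))
      with (Ci * Ci * ((z + w) / (1 - p) * ((z + w) / (1 - p)))) by ring.
    rewrite Ci_sqr; unfold p in *; field; exact Hp1.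
  - rewrite im_mult; unfold Ci at 1 2; cbn [Re Im fst snd].
    pose proof (re_cayley_gt0 p Hp); lra.
Qed.

Lemma n2_ge0 (h : C2) : (0 <= n2 h)%R.
Proof. unfold n2; eapply Rle_trans; [apply Cmod_ge_0 | apply Rmax_l]. Qed.

Lemma C_differentiable_of_quadratic_remainder (f : C2 -> C2) (x : C2) (a b c d : C) (K r : R) :
  (0 < r)%R ->
  (forall h : C2, (n2 h < r)%R ->
     (n2 (sub2 (sub2 (f (add2 x h)) (f x))
               ((a * fst h + b * snd h)%C, (c * fst h + d * snd h)%C)) <= K * n2 h ^ 2)%R) ->
  C_differentiable_at f x.
Proof.
  intros Hr Hrem; exists a, b, c, d; intros eps Heps.
  assert (HK : (0 < Rabs K + 1)%R) by (pose proof (Rabs_pos K); lra).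
  exists (Rmin r (eps / (Rabs K + 1))); split; [apply Rmin_pos; [lra | apply Rdiv_lt_0_compat; lra]|].
  intros h Hh; eapply Rle_trans; [apply Hrem, Rlt_le_trans with (1 := Hh), Rmin_l|].
  pose proof (n2_ge0 h) as Hn.
  assert (Heps' : (n2 h * (Rabs K + 1) <= eps)%R)
    by (apply Rle_div_r; [lra | pose proof (Rmin_r r (eps / (Rabs K + 1))); lra]).
  pose proof (Rle_abs K); nra.
Qed.

Lemma radicand_add2 (x h : C2) :
  radicand (add2 x h) - radicand x
  = - (2 * (fst x * fst h + snd x * snd h) + (fst h * fst h + snd h * snd h)).
Proof. unfold radicand, add2; cbn [fst snd]; ring. Qed.

Lemma radicand_lipschitz (x h : C2) :
  (n2 h <= 1)%R ->
  (Cmod (radicand (add2 x h) - radicand x)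
     <= (2 * Cmod (fst x) + 2 * Cmod (snd x) + 2) * n2 h)%R.
Proof.
  intros Hh; rewrite radicand_add2, Cmod_opp.
  assert (H1 : (Cmod (fst h) <= n2 h)%R) by apply Rmax_l.
  assert (H2 : (Cmod (snd h) <= n2 h)%R) by apply Rmax_r.
  pose proof (Cmod_ge_0 (fst x)); pose proof (Cmod_ge_0 (snd x));
  pose proof (Cmod_ge_0 (fst h)); pose proof (Cmod_ge_0 (snd h)).
  set (u := fst x) in *; set (v := snd x) in *; set (h1 := fst h) in *; set (h2 := snd h) in *.
  assert (Hlin : (Cmod (u * h1 + v * h2) <= (Cmod u + Cmod v) * n2 h)%R).
  { eapply Rle_trans; [apply Cmod_triangle|]; rewrite !Cmod_mult; nra. }
  assert (Hquad : (Cmod (h1 * h1 + h2 * h2) <= 2 * n2 h)%R).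
  { eapply Rle_trans; [apply Cmod_triangle|]; rewrite !Cmod_mult; nra. }
  eapply Rle_trans; [apply Cmod_triangle|].
  rewrite Cmod_mult, Cmod_R, Rabs_pos_eq by lra; nra.
Qed.

Lemma sqrt_expansion (g g' l s : C) :
  g <> 0 -> g' * g' - g * g = - (2 * l + s) ->
  g' - g + l / g = - (s + (g' - g) * (g' - g)) / (2 * g).
Proof.
  intros Hg Hsq; apply Ceq_minus.
  transitivity ((g' * g' - g * g + (2 * l + s)) / (2 * g)).
  - field; exact Hg.
  - rewrite Hsq; field; exact Hg.
Qed.

Lemma csqrt_second_order (q q' l s : C) :
  (0 < Cmod q + Re q)%R -> (0 < Cmod q' + Re q')%R -> q' - q = - (2 * l + s) ->
  (Cmod (csqrt q' - csqrt q + l / csqrt q)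
     <= (Cmod s + (Cmod (q' - q) / Re (csqrt q)) ^ 2) / (2 * Re (csqrt q)))%R.
Proof.
  intros Hq Hq' Hdq.
  set (g := csqrt q); set (g' := csqrt q'); set (al := Re g).
  assert (Hal : (0 < al)%R) by exact (csqrt_re_gt0 q Hq).
  assert (Hgal : (al <= Cmod g)%R) by apply re_le_Cmod'.
  assert (H2g : 2 * g <> 0).
  { apply Cmult_neq_0; [intros E; apply RtoC_inj in E; lra|].
    intros E; unfold al in Hal; rewrite E in Hal; simpl in Hal; lra. }
  assert (Hdg : (Cmod (g' - g) <= Cmod (q' - q) / al)%R).
  { apply Rmult_le_reg_l with al; [exact Hal|].
    replace (al * (Cmod (q' - q) / al))%R with (Cmod (q' - q)) by (field; lra).
    eapply Rle_trans; [apply re_mul_Cmod_sub_le; [exact (Rlt_le _ _ Hal) | apply csqrt_re_ge0]|].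
    unfold g, g'; rewrite !csqrt_sqr by assumption; apply Rle_refl. }
  rewrite (sqrt_expansion g g' l s).
  2: { intros E; apply H2g; rewrite E; ring. }
  2: { unfold g, g'; rewrite !csqrt_sqr by assumption; exact Hdq. }
  rewrite Cmod_div, Cmod_opp, Cmod_mult, Cmod_R, Rabs_pos_eq by (exact H2g || lra).
  assert (Hnum : (Cmod (s + (g' - g) * (g' - g)) <= Cmod s + (Cmod (q' - q) / al) ^ 2)%R).
  { eapply Rle_trans; [apply Cmod_triangle|]; rewrite Cmod_mult.
    pose proof (Cmod_ge_0 (g' - g)); nra. }
  apply Rle_trans with (Cmod (s + (g' - g) * (g' - g)) / (2 * al))%R.
  - apply Rmult_le_compat_l; [apply Cmod_ge_0 | apply Rinv_le_contravar; lra].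
  - apply Rmult_le_compat_r; [apply Rlt_le, Rinv_0_lt_compat; lra | exact Hnum].
Qed.

Lemma sym_Omega1_holomorphic : holomorphic_on Omega1 sym_Omega1.
Proof.
  intros x Hx.
  set (g := csqrt (radicand x)); set (al := Re g).
  set (be := (Cmod (radicand x) + Re (radicand x))%R).
  set (M := (2 * Cmod (fst x) + 2 * Cmod (snd x) + 2)%R).
  assert (Hbe : (0 < be)%R) by exact (Omega1_radicand x Hx).
  assert (Hal : (0 < al)%R) by exact (csqrt_re_gt0 _ Hbe).
  assert (HM : (0 < M)%R) by (unfold M; pose proof (Cmod_ge_0 (fst x)); pose proof (Cmod_ge_0 (snd x)); lra).
  assert (Hg0 : g <> 0) by (intros E; unfold al in Hal; rewrite E in Hal; simpl in Hal; lra).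
  apply (C_differentiable_of_quadratic_remainder _ _ (Ci * - (fst x / g)) (Ci * - (snd x / g)) 0 1
           ((2 + (M / al) ^ 2) / (2 * al)) (Rmin 1 (be / (2 * M)))).
  { apply Rmin_pos; [lra | apply Rdiv_lt_0_compat; lra]. }
  intros h Hh; set (n := n2 h) in *; pose proof (n2_ge0 h) as Hn.
  assert (Hn1 : (n <= 1)%R) by (pose proof (Rmin_l 1 (be / (2 * M))); lra).
  assert (HdQ : (Cmod (radicand (add2 x h) - radicand x) <= M * n)%R)
    by exact (radicand_lipschitz x h Hn1).
  assert (Hbe' : (0 < Cmod (radicand (add2 x h)) + Re (radicand (add2 x h)))%R).
  { assert (HMn : (n * (2 * M) < be)%R)
      by (apply Rlt_div_r; [lra | pose proof (Rmin_r 1 (be / (2 * M))); lra]).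
    pose proof (Cmod_add_re_lipschitz (radicand x) (radicand (add2 x h))); unfold be in *; lra. }
  set (s := fst h * fst h + snd h * snd h).
  assert (Hs : (Cmod s <= 2 * n ^ 2)%R).
  { assert (Cmod (fst h) <= n)%R by apply Rmax_l; assert (Cmod (snd h) <= n)%R by apply Rmax_r.
    pose proof (Cmod_ge_0 (fst h)); pose proof (Cmod_ge_0 (snd h)).
    eapply Rle_trans; [apply Cmod_triangle|]; rewrite !Cmod_mult; nra. }
  pose proof (csqrt_second_order _ _ (fst x * fst h + snd x * snd h) s Hbe Hbe' (radicand_add2 x h))
    as Hrem; fold g al in Hrem.
  unfold n2 at 1, sub2, sym_Omega1; cbn [fst snd]; fold g.
  replace (Ci * csqrt (radicand (add2 x h)) - Ci * g
             - (Ci * - (fst x / g) * fst h + Ci * - (snd x / g) * snd h))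
    with (Ci * (csqrt (radicand (add2 x h)) - g + (fst x * fst h + snd x * snd h) / g))
    by (field; exact Hg0).
  replace (snd (add2 x h) - snd x - (0 * fst h + 1 * snd h)) with (RtoC 0)
    by (unfold add2; cbn [snd]; ring).
  rewrite Cmod_0, Cmod_mult, Cmod_Ci, Rmult_1_l.
  assert (Hq : (Cmod (radicand (add2 x h) - radicand x) / al <= M / al * n)%R).
  { replace (M / al * n)%R with (M * n / al)%R by (field; lra).
    apply Rmult_le_compat_r; [apply Rlt_le, Rinv_0_lt_compat, Hal | exact HdQ]. }
  apply Rmax_lub; [|apply Rmult_le_pos; [apply Rdiv_le_0_compat; nra | nra]].
  eapply Rle_trans; [exact Hrem|].
  replace ((2 + (M / al) ^ 2) / (2 * al) * n ^ 2)%R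
    with ((2 * n ^ 2 + (M / al * n) ^ 2) / (2 * al))%R by (field; lra).
  apply Rmult_le_compat_r; [apply Rlt_le, Rinv_0_lt_compat; lra|].
  apply Rplus_le_compat; [exact Hs|].
  apply pow_incr; split; [apply Rdiv_le_0_compat; [apply Cmod_ge_0 | lra] | exact Hq].
Qed.

Lemma Cmod_fst_le_sym_Omega1 (x : C2) :
  Omega1 x -> (Cmod (fst x) <= 1 + Cmod (fst (sym_Omega1 x)) + Cmod (snd x))%R.
Proof.
  intros Hx.
  assert (Hu : fst x * fst x = fst (sym_Omega1 x) * fst (sym_Omega1 x) - snd x * snd x + 1)
    by (rewrite sym_Omega1_fst_sqr by exact Hx; ring).
  assert (Hsq : (Cmod (fst x) ^ 2 <= Cmod (fst (sym_Omega1 x)) ^ 2 + Cmod (snd x) ^ 2 + 1)%R).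
  { rewrite <- !Cmod_sqr, Hu.
    eapply Rle_trans; [apply Cmod_triangle|]; rewrite Cmod_1.
    eapply Rle_trans; [apply Rplus_le_compat_r, Cmod_triangle|]; rewrite Cmod_opp; lra. }
  pose proof (Cmod_ge_0 (fst x)); pose proof (Cmod_ge_0 (fst (sym_Omega1 x)));
  pose proof (Cmod_ge_0 (snd x)); nra.
Qed.

Lemma filterlim_sqr_relation (w u v : nat -> C) (lw lu lv : C) :
  (forall n, w n * w n = u n * u n + v n * v n - 1) ->
  filterlim w eventually (locally lw) -> filterlim u eventually (locally lu) ->
  filterlim v eventually (locally lv) -> lw * lw = lu * lu + lv * lv - 1.
Proof.
  intros Hrel Hw Hu Hv.
  (* with the filter instance left implicit, elaboration does not terminate *)
  apply (@filterlim_locally_unique nat C_AbsRing C_NormedModule eventually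
           (Proper_StrongProper _ eventually_filter) (fun n => w n * w n));
    [apply filterlim_Cmult; assumption|].
  apply (filterlim_ext (fun n => u n * u n + v n * v n - 1)); [intros n; symmetry; apply Hrel|].
  apply filterlim_Cplus; [apply filterlim_Cplus; apply filterlim_Cmult; assumption|].
  apply filterlim_const.
Qed.

Lemma sym_Omega1_proper : proper_map Omega1 D1 sym_Omega1.
Proof.
  split; [exact sym_Omega1_maps_into_D1|].
  intros K HK HKD xs Hxs.
  destruct (HK (fun n => sym_Omega1 (xs n)) (fun n => proj2 (Hxs n))) as [phi [y [Hphi [Ky Hy]]]].
  apply seq_cvg_iff in Hy; destruct Hy as [Hw Hv]; cbn [sym_Omega1 fst snd] in Hv.
  set (u n := fst (xs (phi n))).
  assert (Hbound : eventually (fun n => (Cmod (u n) <= 1 + (Cmod (fst y) + 1) + (Cmod (snd y) + 1))%R)).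
  { generalize (filter_and _ _ (filterlim_Cmod_eventually_le _ _ Hw) (filterlim_Cmod_eventually_le _ _ Hv)).
    apply filter_imp; intros n [Hwn Hvn].
    pose proof (Cmod_fst_le_sym_Omega1 _ (proj1 (Hxs (phi n)))); unfold u; lra. }
  destruct (bounded_C_seq_cvg_subseq u _ Hbound) as [psi [a [Hpsi Ha]]].
  destruct (proj1 (D1_iff (fst y) (snd y))) as [Hineq Him]; [rewrite <- surjective_pairing; exact (HKD y Ky)|].
  assert (Hrel : fst y * fst y = a * a + snd y * snd y - 1).
  { apply (filterlim_sqr_relation (fun n => fst (sym_Omega1 (xs (phi (psi n)))))
             (fun n => u (psi n)) (fun n => snd (xs (phi (psi n))))).
    - intros n; apply sym_Omega1_fst_sqr, Hxs.
    - exact (filterlim_subseq _ _ _ Hpsi Hw).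
    - exact Ha.
    - exact (filterlim_subseq _ _ _ Hpsi Hv). }
  assert (Hy : sym_Omega1 (a, snd y) = y)
    by (rewrite (sym_Omega1_eq _ _ _ Hrel Him); symmetry; apply surjective_pairing).
  exists (fun n => phi (psi n)), (a, snd y); split; [|split; [split|]].
  - exact (strict_incr_comp phi psi Hphi Hpsi).
  - exact (proj2 (Omega1_iff_D1_ineq _ _ _ Hrel) Hineq).
  - rewrite Hy; exact Ky.
  - apply seq_cvg_iff; split; [exact Ha | exact (filterlim_subseq _ _ _ Hpsi Hv)].
Qed.

Theorem theorem4p7 :
  exists symO : C2 -> C2,
    holomorphic_on Omega1 symO /\
    proper_map Omega1 D1 symO /\
    (forall z w : C, Disc z -> Disc w -> symO (Hmap (z, w)) = Fmap (symm (z, w))).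
Proof.
  exists sym_Omega1; split; [|split].
  - exact sym_Omega1_holomorphic.
  - exact sym_Omega1_proper.
  - exact sym_Omega1_Hmap.
Qed.
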